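(* Every GO-space is $C$-selective.
   Context: All spaces are assumed $T_1$. A GO-space (generalized ordered space) is a linearly ordered set with a topology finer than the order topology that has a base of order-convex sets (equivalently, a subspace of a linearly ordered topological space). For spaces $Y$, $X$, a map $\varphi:Y\to\mathcal P(X)\setminus\{\emptyset\}$ is lower semicontinuous (l.s.c.) if $\{y:\varphi(y)\cap U\neq\emptyset\}$ is open in $Y$ for every open $U\subseteq X$; a selection is a map $f:Y\to X$ with $f(y)\in\varphi(y)$ for all $y$. $X$ is $Y$-selective if every l.s.c. map from $Y$ to the family of nonempty closed subsets of $X$ has a continuous selection; $X$ is $C$-selective if it is $Y$-selective for every countable regular space $Y$. *)

From HB Require Import structures.
From mathcomp Require Import all_boot all_order all_algebra.
From mathcomp Require Import all_classical topology.
Set Implicit Arguments.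
Unset Strict Implicit.
Unset Printing Implicit Defensive.
Local Open Scope classical_set_scope.

Definition linear_order (X : Type) (le : X -> X -> Prop) : Prop :=
  [/\ (forall x, le x x),
      (forall x y, le x y -> le y x -> x = y),
      (forall x y z, le x y -> le y z -> le x z) &
      (forall x y, le x y \/ le y x)].

Definition strict (X : Type) (le : X -> X -> Prop) (x y : X) : Prop :=
  le x y /\ x <> y.

Definition order_convex (X : Type) (le : X -> X -> Prop) (A : set X) : Prop :=
  forall x y z, A x -> A z -> le x y -> le y z -> A y.

(** (X, le) is a GO-space: le is a linear order, the topology of X is finer
    than the order topology (open rays are open; these form a subbase of
    the order topology), and the topology has a base of order-convex sets. *)
Definition GO_space (X : topologicalType) (le : X -> X -> Prop) : Prop :=
  [/\ linear_order le,
      (forall a : X, open [set x | strict le x a]),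
      (forall a : X, open [set x | strict le a x]) &
      (forall (U : set X) (x : X), open U -> U x ->
         exists V : set X, [/\ open V, order_convex le V, V x & V `<=` U])].

Definition lsc (Y X : topologicalType) (phi : Y -> set X) : Prop :=
  forall U : set X, open U -> open [set y | phi y `&` U !=set0].

Definition selective (Y X : topologicalType) : Prop :=
  forall phi : Y -> set X,
    (forall y, closed (phi y) /\ phi y !=set0) -> lsc phi ->
    exists f : Y -> X, continuous f /\ (forall y, phi y (f y)).

Definition C_selective (X : topologicalType) : Prop :=
  forall Y : topologicalType,
    countable [set: Y] -> accessible_space Y -> regular_space Y ->
    selective Y X.

From mathcomp Require Import all_boot all_order all_algebra.
From mathcomp Require Import all_classical topology.

Local Open Scope classical_set_scope.

(* Countability lets us treat the points y_0, y_1, ... of Y one at a time: an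
   l.s.c. map psi with closed nonempty values is shrunk to a map of the same kind
   that takes a single value xs at the current point and is u.s.c. there.  Once
   every point has been treated, these single values form a continuous selection.

   To shrink psi at ys, pick xs in psi ys, a decreasing sequence of open
   neighbourhoods O_j of xs, and nested clopen neighbourhoods W_j of ys (countable
   regular spaces are zero-dimensional) on which psi meets O_j; on W_j \ W_(j+1)
   replace psi y by closure (psi y `&` O_j) `&` C.  In a GO-space O_j is cut out
   by order-convex neighbourhoods of xs, the i-th one missing psi y_i unless xs is
   in it, so that xs lies in psi y for every y in all the W_j.  On each side of
   xs, either psi y can always be pushed from that side to xs, and the closed set
   C discards the side, or convexity squeezes the closures of the O_j on that side
   into any neighbourhood of xs. *)

Definition lsc_closed {Y X : topologicalType} (phi : Y -> set X) : Prop :=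
  (forall y, closed (phi y) /\ phi y !=set0) /\ lsc phi.

Definition usc_at {Y X : topologicalType} (phi : Y -> set X) (y0 : Y) : Prop :=
  forall U, open U -> phi y0 `<=` U -> \forall y \near y0, phi y `<=` U.

Definition has_clopen_base (T : topologicalType) : Prop :=
  forall (x : T) (U : set T), open U -> U x -> exists W, [/\ clopen W, W x & W `<=` U].

Lemma dependent_choice_inv {A : Type} {I : A -> Prop} {R : nat -> A -> A -> Prop} {a0 : A} :
  I a0 -> (forall n a, I a -> exists b, I b /\ R n a b) ->
  exists s : nat -> A, s 0 = a0 /\ forall n, I (s n) /\ R n (s n) (s n.+1).
Proof.
move=> I0 step.
pose g n a : A := if pselect (I a) is left Ia then projT1 (cid (step n a Ia)) else a.
have gP n a : I a -> I (g n a) /\ R n a (g n a).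
  by move=> Ia; rewrite /g; case: pselect => // Ia'; case: cid.
pose s := fix s n := if n is n'.+1 then g n' (s n') else a0.
have sI n : I (s n) by elim: n => [|n IH] //=; case: (gP n _ IH).
by exists s; split => // n; split => //; case: (gP n _ (sI n)).
Qed.

Lemma pred_nat_trichotomy (P : nat -> Prop) :
  ~ P 0 \/ (exists j, P j /\ ~ P j.+1) \/ (forall j, P j).
Proof.
have [allP|] := pselect (forall j, P j); first by right; right.
move=> /existsNP [j]; elim: j => [|j IH] nPj; first by left.
by have [Pj|/IH//] := pselect (P j); right; left; exists j.
Qed.

Lemma open_bigcap_ord {T : topologicalType} (F : nat -> set T) n :
  (forall i, open (F i)) -> open (\bigcap_(i < n) F i).
Proof.
by move=> oF; rewrite bigcap_mkord; apply: big_ind => [|A B|i _];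
  [exact: openT | exact: openI | exact: oF].
Qed.

Lemma bigcap_ord_decr {T : Type} (F : nat -> set T) i j :
  (i <= j)%N -> \bigcap_(k < j) F k `<=` \bigcap_(k < i) F k.
Proof. by move=> ij w Fw k /= ki; apply: Fw; exact: leq_trans ki ij. Qed.

Section TopologyFacts.
Context {T : topologicalType}.

Lemma open_locally (S : set T) :
  (forall z, S z -> exists B, [/\ open B, B z & B `<=` S]) -> open S.
Proof.
by move=> loc; rewrite openE => z /loc [B [oB Bz BS]]; rewrite /interior nbhsE; exists B.
Qed.

Lemma closure_sub_closed {A B : set T} : A `<=` B -> closed B -> closure A `<=` B.
Proof. by move=> AB cB; rewrite closureE; exact: smallest_sub. Qed.

Lemma regular_open_nbhs {y : T} {U : set T} : regular_space T -> open U -> U y ->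
  exists V, [/\ open V, V y & closure V `<=` U].
Proof.
move=> reg oU Uy; have [V] := reg y U (open_nbhs_nbhs (conj oU Uy)).
rewrite nbhsE => -[B [oB By] BV] clVU.
by exists B; split => //; apply: subset_trans clVU; exact: closureS.
Qed.

Lemma open_nbhs_dichotomy (x : T) (P : set T -> Prop) :
  exists G, [/\ open G, G x & P G \/ forall G', open G' -> G' x -> ~ P G'].
Proof.
have [[G [oG Gx PG]]|noG] := pselect (exists G, [/\ open G, G x & P G]).
  by exists G; split => //; left.
exists setT; split => //; first exact: openT.
by right => G oG Gx PG; apply: noG; exists G.
Qed.

End TopologyFacts.

Section SelectionByReductions.
Context {Y X : topologicalType} (e : nat -> Y).
Hypothesis e_surj : forall y, exists n, e n = y.
Hypothesis reduce : forall (psi : Y -> set X) (y : Y), lsc_closed psi ->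
  exists psi', [/\ lsc_closed psi', forall z, psi' z `<=` psi z,
                   exists x, psi' y = [set x] & usc_at psi' y].

Lemma selective_of_reductions : selective Y X.
Proof.
move=> phi phi_cl phi_lsc.
pose R n (psi psi' : Y -> set X) := [/\ forall z, psi' z `<=` psi z,
  exists x, psi' (e n) = [set x] & usc_at psi' (e n)].
have [n psi /(reduce _ (e n)) [psi' [? ? ? ?]]|s [s0 sP]] :=
  @dependent_choice_inv _ lsc_closed R phi (conj phi_cl phi_lsc).
  by exists psi'.
have s_decr : {homo s : i j / (i <= j)%N >-> forall z, j z `<=` i z}.
  apply: homo_leq => [A z //|B A C AB BC z|n]; first exact: subset_trans (BC z) (AB z).
  by have [_ []] := sP n.
have /choice [x sx] : forall n, exists x, s n.+1 (e n) = [set x].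
  by move=> n; have [_ []] := sP n.
have /choice [idx idxE] := e_surj.
pose f y := x (idx y).
have f_in m y : s m y (f y).
  have sfy : s (idx y).+1 y = [set f y] by have := sx (idx y); rewrite idxE.
  have [w smw] := ((sP (maxn m (idx y).+1)).1.1 y).2.
  have := s_decr _ _ (leq_maxr m _) y w smw; rewrite sfy => <-.
  exact: s_decr _ _ (leq_maxl m _) y w smw.
exists f; split => [z|y]; last by rewrite -s0; exact: f_in.
move=> A; rewrite nbhsE => -[B [oB Bfz] BA].
have [_ [_ _ usc]] := sP (idx z).
have sB : s (idx z).+1 (e (idx z)) `<=` B by rewrite sx => w ->.
have := usc B oB sB; rewrite idxE => near_sB.
by apply: filterS near_sB => y syB; apply/BA/syB; exact: f_in.
Qed.

End SelectionByReductions.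

Section CountableRegular.
Context {Y : topologicalType} (e : nat -> Y).
Hypothesis e_surj : forall y, exists n, e n = y.
Hypothesis Y_regular : regular_space Y.

Definition separating (U : set Y) (PQ : set Y * set Y) : Prop :=
  [/\ open PQ.1, open PQ.2, closure PQ.1 `&` closure PQ.2 = set0 & closure PQ.1 `<=` U].

Lemma separating_absorb {U : set Y} {PQ : set Y * set Y} (z : Y) : open U -> separating U PQ ->
  exists PQ', separating U PQ' /\ [/\ PQ.1 `<=` PQ'.1, PQ.2 `<=` PQ'.2 & PQ'.1 z \/ PQ'.2 z].
Proof.
case: PQ => P Q oU [/= oP oQ clPQ clPU].
have closure_sep (A V : set Y) : closure V `<=` ~` closure A ->
    closure A `&` closure V = set0.
  by move=> VA; apply/seteqP; split => // w [Aw /VA].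
have [Pz|nPz] := pselect (closure P z).
- have Qz : (U `&` ~` closure Q) z.
    by split; [exact: clPU | move=> Qz; have : (closure P `&` closure Q) z by []; rewrite clPQ].
  have oUQ : open (U `&` ~` closure Q).
    by apply: openI => //; apply: closed_openC; exact: closed_closure.
  have [V [oV Vz clV]] := regular_open_nbhs Y_regular oUQ Qz.
  exists (P `|` V, Q); split; split => //=; first exact: openU.
  + by rewrite closureU setIUl clPQ set0U setIC closure_sep // => w /clV [].
  + by rewrite closureU => w [/clPU | /clV []].
  + by left; right.
- have oPc : open (~` closure P) by apply: closed_openC; exact: closed_closure.
  have [V [oV Vz clV]] := regular_open_nbhs Y_regular oPc nPz.
  exists (P, Q `|` V); split; split => //=; first exact: openU.
  + by rewrite closureU setIUr clPQ set0U closure_sep.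
  + by right; right.
Qed.

Lemma countable_regular_clopen_base : has_clopen_base Y.
Proof.
move=> y U oU Uy; have [P0 [oP0 P0y clP0U]] := regular_open_nbhs Y_regular oU Uy.
have sep0 : separating U (P0, set0) by split => //=; [exact: open0 | rewrite closure0 setI0].
have [s [s0 sP]] := dependent_choice_inv sep0 (fun n _ => separating_absorb (e n) oU).
have s_incr : {homo s : i j / (i <= j)%N >-> i.1 `<=` j.1 /\ i.2 `<=` j.2}.
  apply: homo_leq => [A|B A C [AB1 AB2] [BC1 BC2]|n]; first by split.
    by split; [exact: subset_trans AB1 BC1 | exact: subset_trans AB2 BC2].
  by have [_ []] := sP n.
pose A := \bigcup_n (s n).1; pose B := \bigcup_n (s n).2.
have AB w : A w -> B w -> False.
  move=> [i _ Aw] [j _ Bw]; pose k := maxn i j.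
  have [[_ _ clAB _] _] := sP k.
  suff : (closure (s k).1 `&` closure (s k).2) w by rewrite clAB.
  split; apply: subset_closure.
    exact: (s_incr _ _ (leq_maxl i j)).1.
  exact: (s_incr _ _ (leq_maxr i j)).2.
have AUB w : A w \/ B w.
  by have [n <-] := e_surj w; have [_ [_ _ [?|?]]] := sP n; [left|right]; exists n.+1.
have oA : open A by apply: bigcup_open => n _; case: (sP n) => -[].
have oB : open B by apply: bigcup_open => n _; case: (sP n) => -[].
have BcA : ~` B = A.
  by apply/seteqP; split => w; [case: (AUB w) | move=> /AB].
exists A; split.
- by split => //; rewrite -BcA; exact: open_closedC.
- by exists 0%N => //; rewrite s0.
- by move=> w [n _ snw]; have [[_ _ _ clU] _] := sP n; exact/clU/subset_closure.
Qed.

End CountableRegular.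

Lemma nested_clopen_nbhs {T : topologicalType} (x : T) (S : nat -> set T) :
  has_clopen_base T -> (forall j, open (S j)) -> (forall j, S j x) ->
  exists W : nat -> set T, [/\ forall j, clopen (W j),
    forall i j, (i <= j)%N -> W j `<=` W i, forall j, W j x & forall j, W j `<=` S j].
Proof.
move=> base oS Sx.
have /choice [Z HZ] : forall j, exists Z, [/\ clopen Z, Z x & Z `<=` S j].
  by move=> j; exact: base.
exists (fun j => \bigcap_(i < j.+1) Z i); split.
- move=> j; split; first by apply: open_bigcap_ord => i; case: (HZ i) => -[].
  by apply: closed_bigI => i _; case: (HZ i) => -[].
- by move=> i j ij; apply: bigcap_ord_decr.
- by move=> j i _; case: (HZ i).
- by move=> j w Zw; case: (HZ j) => _ _; apply; exact: Zw j (ltnSn j).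
Qed.

Set Implicit Arguments.
Record pinching (X Y : topologicalType) (psi : Y -> set X) (xs : X) (e : nat -> Y)
    (O : nat -> set X) (C : set X) : Prop := Pinching {
  pinch_open : forall j, open (O j);
  pinch_decr : forall i j, (i <= j)%N -> O j `<=` O i;
  pinch_xs : forall j, O j xs;
  pinch_avoids : forall i, ~ psi (e i) xs -> O i `&` psi (e i) = set0;
  allowed_closed : closed C;
  allowed_xs : C xs;
  allowed_punctured_open : open (C `\ xs);
  pinch_allowed_shrinks : forall U, open U -> U xs -> exists k, closure (O k) `&` C `<=` U;
  psi_off_allowed : forall y j v, psi y v -> O j v -> ~ C v -> psi y xs }.
Unset Implicit Arguments.
Arguments pinching {X Y}.

Section Refinement.
Context {X Y : topologicalType}.
Variables (psi : Y -> set X) (xs : X) (e : nat -> Y).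
Variables (O : nat -> set X) (C : set X) (W : nat -> set Y).
Hypothesis X_T1 : accessible_space X.
Hypothesis e_surj : forall y, exists n, e n = y.
Hypothesis psi_lsc_closed : lsc_closed psi.
Hypothesis OC_pinching : pinching psi xs e O C.
Hypothesis W_clopen : forall j, clopen (W j).
Hypothesis W_decr : forall i j, (i <= j)%N -> W j `<=` W i.
Hypothesis W_meets : forall j y, W j y -> psi y `&` O j !=set0.

Let W_limit y : (forall j, W j y) -> psi y xs.
Proof.
move=> Wy; have [i ei] := e_surj y; rewrite -ei in Wy *.
apply: contrapT => /(pinch_avoids OC_pinching) avoid.
have [v [psiv Ov]] := W_meets _ _ (Wy i).
have : (O i `&` psi (e i)) v by split.
by rewrite avoid.
Qed.

Let psi_closed y : closed (psi y) := (psi_lsc_closed.1 y).1.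

Definition pinched (y : Y) : set X :=
  [set x | psi y x /\ forall j, W j y -> (closure (psi y `&` O j) `&` C) x].

Lemma pinched_outside {y} : ~ W 0 y -> pinched y = psi y.
Proof.
move=> nW0; apply/seteqP; split => [x [] //|x psix]; split => // j Wj.
by case: nW0; exact: W_decr (leq0n j) _ Wj.
Qed.

Lemma pinched_band {j y} : W j y -> ~ W j.+1 y -> pinched y = closure (psi y `&` O j) `&` C.
Proof.
move=> Wj nWj1; apply/seteqP; split => [x [_ /(_ j Wj)] //|x [clx Cx]]; split.
  exact: closure_sub_closed (@subIsetl _ _ _) (psi_closed y) x clx.
move=> i Wi; split => //.
have ij : (i <= j)%N.
  by rewrite leqNgt; apply/negP => ji; apply: nWj1; exact: W_decr ji _ Wi.
by apply: closureS clx => p [psip Op]; split => //; exact: pinch_decr OC_pinching _ _ ij _ Op.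
Qed.

Lemma pinched_band_mem {j y v} : W j y -> ~ W j.+1 y -> psi y v -> O j v ->
  pinched y v \/ (~ C v /\ pinched y xs).
Proof.
move=> Wj nWj1 psiv Ov; rewrite (pinched_band Wj nWj1).
have [Cv|nCv] := pselect (C v).
  by left; split => //; apply: subset_closure.
have psixs := psi_off_allowed OC_pinching _ _ _ psiv Ov nCv.
right; split => //; split; last exact: allowed_xs OC_pinching.
by apply: subset_closure; split => //; exact: (pinch_xs OC_pinching j).
Qed.

Lemma pinched_shrinks {U} : open U -> U xs -> exists k, forall y, W k y -> pinched y `<=` U.
Proof.
move=> oU Uxs; have [k clOCU] := pinch_allowed_shrinks OC_pinching U oU Uxs.
exists k => y Wk x [_ /(_ k Wk) [clx Cx]]; apply: clOCU; split => //.
exact: closureS (@subIsetr _ _ _) _ clx.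
Qed.

Lemma pinched_limit y : (forall j, W j y) -> pinched y = [set xs].
Proof.
move=> Wy; apply/seteqP; split => [x refx|_ ->]; last first.
  split=> [|j _]; first exact: W_limit.
  split; last exact: allowed_xs OC_pinching.
  by apply: subset_closure; split; [exact: W_limit | exact: (pinch_xs OC_pinching j)].
apply: contrapT => nxxs.
have oU : open (~` [set x]) by rewrite openC; exact: accessible_closed_set1.
have [k shrink] := pinched_shrinks oU (fun exs => nxxs (esym exs)).
exact: shrink y (Wy k) x refx erefl.
Qed.

Lemma pinched_nonempty y : pinched y !=set0.
Proof.
have [nW0|[[j [Wj nWj1]]|Wy]] := pred_nat_trichotomy (W ^~ y).
- by rewrite pinched_outside //; exact: (psi_lsc_closed.1 y).2.
- have [v [psiv Ov]] := W_meets _ _ Wj.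
  by case: (pinched_band_mem Wj nWj1 psiv Ov) => [?|[_ ?]]; [exists v | exists xs].
- by rewrite pinched_limit //; exists xs.
Qed.

Lemma pinched_closed y : closed (pinched y).
Proof.
have [nW0|[[j [Wj nWj1]]|Wy]] := pred_nat_trichotomy (W ^~ y).
- by rewrite pinched_outside.
- rewrite (pinched_band Wj nWj1); apply: closedI; first exact: closed_closure.
  exact: allowed_closed OC_pinching.
- by rewrite pinched_limit //; exact: accessible_closed_set1.
Qed.

Lemma pinched_lsc : lsc pinched.
Proof.
move=> U oU; apply: open_locally => z [u [refu Uu]].
have [nW0|[[j [Wj nWj1]]|Wz]] := pred_nat_trichotomy (W ^~ z).
- exists (~` W 0 `&` [set y | psi y `&` U !=set0]); split.
  + by apply: openI; [rewrite openC; exact: (W_clopen 0).2 | exact: psi_lsc_closed.2].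
  + by split => //; exists u; rewrite -(pinched_outside nW0).
  + by move=> y [nW0y] /=; rewrite (pinched_outside nW0y).
- have [clu Cu] : (closure (psi z `&` O j) `&` C) u by rewrite -(pinched_band Wj nWj1).
  (* Near u <> xs stay inside C; near u = xs a point outside C may be traded for xs. *)
  have [D [oD Du DU DC]] :
      exists D, [/\ open D, D u, D `<=` U & forall v, D v -> ~ C v -> U xs].
    have [<-|nuxs] := pselect (u = xs); first by exists U; split.
    exists (U `&` (C `\ xs)); split => //.
      by apply: openI => //; exact: allowed_punctured_open OC_pinching.
    by move=> v [_ [Cv _]] /(_ Cv).
  exists ((W j `&` ~` W j.+1) `&` [set y | psi y `&` (O j `&` D) !=set0]); split.
  + apply: openI.
      by apply: openI; [exact: (W_clopen j).1 | rewrite openC; exact: (W_clopen j.+1).2].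
    by apply: psi_lsc_closed.2; apply: openI => //; exact: (pinch_open OC_pinching j).
  + split => //; have [v [[psiv Ov] Dv]] := clu D (open_nbhs_nbhs (conj oD Du)).
    by exists v.
  + move=> y [[Wjy nWj1y] [v [psiv [Ov Dv]]]].
    case: (pinched_band_mem Wjy nWj1y psiv Ov) => [refv|[nCv refxs]].
      by exists v; split => //; exact: DU.
    by exists xs; split => //; exact: DC nCv.
- move: refu; rewrite pinched_limit // => uxs; rewrite uxs in Uu.
  have [k shrink] := pinched_shrinks oU Uu.
  exists (W k); split => [|//|y Wky]; first exact: (W_clopen k).1.
  by have [x refx] := pinched_nonempty y; exists x; split => //; exact: shrink refx.
Qed.

Lemma pinched_lsc_closed : lsc_closed pinched.
Proof.
by split => [y|]; [split; [exact: pinched_closed | exact: pinched_nonempty] | exact: pinched_lsc].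
Qed.

Lemma pinched_usc_at ys : (forall j, W j ys) -> usc_at pinched ys.
Proof.
move=> Wys U oU; rewrite pinched_limit // => xsU.
have [k shrink] := pinched_shrinks oU (xsU xs erefl).
exact: filterS shrink (open_nbhs_nbhs (conj (W_clopen k).1 (Wys k))).
Qed.

End Refinement.

Section GOSpaceFacts.
Context {X : topologicalType} {le : X -> X -> Prop}.
Hypothesis GO : GO_space le.

Let le_refl x : le x x. Proof. by have [[refl _ _ _] _ _ _] := GO. Qed.
Let le_anti x y : le x y -> le y x -> x = y.
Proof. by have [[_ anti _ _] _ _ _] := GO; exact: anti. Qed.
Let le_total x y : le x y \/ le y x. Proof. by have [[_ _ _ total] _ _ _] := GO. Qed.

Lemma strict_dual x y : strict (fun x y => le y x) x y <-> strict le y x.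
Proof. by split => -[lexy nxy]; split => // eyx; apply: nxy. Qed.

Lemma order_convex_dual (A : set X) :
  order_convex (fun x y => le y x) A <-> order_convex le A.
Proof. by split => cA x y z Ax Az xy yz; exact: cA z y x Az Ax yz xy. Qed.

Lemma GO_space_dual : GO_space (fun x y => le y x).
Proof.
have [[_ _ le_trans _] ray_lt ray_gt base] := GO.
split.
- split=> [x | x y yx xy | x y z yx zy | x y].
  + exact: le_refl.
  + exact: le_anti.
  + exact: le_trans zy yx.
  + by case: (le_total x y); [right|left].
- move=> a; rewrite (_ : [set x | _] = [set x | strict le a x]) //.
  by apply/seteqP; split => x /strict_dual.
- move=> a; rewrite (_ : [set x | _] = [set x | strict le x a]) //.
  by apply/seteqP; split => x /strict_dual.
- move=> U x oU Ux; have [V [oV cV Vx VU]] := base U x oU Ux.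
  by exists V; split => //; apply/order_convex_dual.
Qed.

Lemma order_convex_gt {N : set X} {x v : X} : order_convex le N -> N x -> ~ N v -> le v x ->
  N `<=` [set w | strict le v w].
Proof.
move=> cN Nx nNv vx w Nw; case: (le_total w v) => [wv|vw].
  by exfalso; apply: nNv; exact: cN w v x Nw Nx wv vx.
by split => // evw; apply: nNv; rewrite evw.
Qed.

Lemma closure_gt {v : X} : closure [set w | strict le v w] `<=` [set w | le v w].
Proof.
have [_ ray_lt _ _] := GO.
have ge_closed : closed (~` [set w | strict le w v]) by rewrite closedC.
have gt_ge : [set w | strict le v w] `<=` ~` [set w | strict le w v].
  by move=> w [vw nvw] [wv _]; apply: nvw; exact: le_anti.
apply: subset_trans (closure_sub_closed gt_ge ge_closed) _.
move=> w nwv; case: (le_total v w) => // wv.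
by have [->|nwv'] := pselect (w = v); [exact: le_refl | case: nwv].
Qed.

Lemma strict_total {x y : X} : x <> y -> strict le x y \/ strict le y x.
Proof.
by move=> nxy; case: (le_total x y) => ?; [left | right]; split => // eyx; apply: nxy.
Qed.

Lemma strict_asym {x y : X} : strict le x y -> ~ strict le y x.
Proof. by move=> [xy nxy] [yx _]; apply: nxy; exact: le_anti. Qed.

Lemma convex_nbhs_avoiding (F : set X) x : closed F ->
  exists V, [/\ open V, order_convex le V, V x & ~ F x -> V `&` F = set0].
Proof.
have [_ _ _ base] := GO.
move=> clF; have [Fx|nFx] := pselect (F x).
  by exists setT; split => //; exact: openT.
have [V [oV cV Vx VF]] := base _ x (closed_openC clF) nFx.
by exists V; split => // _; apply/seteqP; split => // w [/VF].
Qed.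

End GOSpaceFacts.

Definition below_good {X Y : topologicalType} (le : X -> X -> Prop) (psi : Y -> set X)
    (xs : X) (G : set X) : Prop :=
  forall y v, psi y v -> G v -> strict le v xs -> psi y xs.

Section OneSide.
Context {X Y : topologicalType} {le : X -> X -> Prop} {psi : Y -> set X} {xs : X}.
Context {e : nat -> Y} {N : nat -> set X}.
Hypothesis GO : GO_space le.
Hypothesis e_surj : forall y, exists n, e n = y.
Hypothesis N_convex : forall i, order_convex le (N i).
Hypothesis N_xs : forall i, N i xs.
Hypothesis N_avoids : forall i, ~ psi (e i) xs -> N i `&` psi (e i) = set0.

Lemma below_bad_shrinks {O : nat -> set X} :
  (forall G, open G -> G xs -> ~ below_good le psi xs G) -> (forall i, O i `<=` N i) ->
  forall U, open U -> U xs -> exists k, closure (O k) `&` [set w | strict le w xs] `<=` U.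
Proof.
move=> bad ON U oU Uxs; have [_ _ _ base] := GO.
have [V [oV cV Vxs VU]] := base U xs oU Uxs.
have [y [v [yv Vv vxs nyxs]]] :
    exists y v, [/\ psi y v, V v, strict le v xs & ~ psi y xs].
  apply: contrapT => noyv; apply: (bad V oV Vxs) => y v yv Vv vxs.
  by apply: contrapT => nyxs; apply: noyv; exists y, v.
have [i ei] := e_surj y; rewrite -ei in yv nyxs.
have nNv : ~ N i v.
  by move=> Nv; have : (N i `&` psi (e i)) v by []; rewrite N_avoids.
have Ogt : O i `<=` [set w | strict le v w].
  exact: subset_trans (ON i) (order_convex_gt GO (N_convex i) (N_xs i) nNv vxs.1).
exists i => w [/(closureS Ogt)/(closure_gt GO) vw wxs].
by apply: VU; exact: cV v w xs Vv Vxs vw wxs.1.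
Qed.

End OneSide.

Section GOPinching.
Context {X Y : topologicalType}.
Variables (le : X -> X -> Prop) (psi : Y -> set X) (xs : X) (e : nat -> Y).
Variables (N : nat -> set X) (GL GR : set X).
Hypothesis GO : GO_space le.
Hypothesis e_surj : forall y, exists n, e n = y.
Hypothesis N_open : forall i, open (N i).
Hypothesis N_convex : forall i, order_convex le (N i).
Hypothesis N_xs : forall i, N i xs.
Hypothesis N_avoids : forall i, ~ psi (e i) xs -> N i `&` psi (e i) = set0.
Hypothesis GL_open : open GL.
Hypothesis GL_xs : GL xs.
Hypothesis GL_dichotomy : below_good le psi xs GL \/
  forall G, open G -> G xs -> ~ below_good le psi xs G.
Hypothesis GR_open : open GR.
Hypothesis GR_xs : GR xs.
Hypothesis GR_dichotomy : below_good (fun x y => le y x) psi xs GR \/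
  forall G, open G -> G xs -> ~ below_good (fun x y => le y x) psi xs G.

Let good_left := below_good le psi xs GL.
Let good_right := below_good (fun x y => le y x) psi xs GR.

Definition GO_pinch (j : nat) : set X := GL `&` GR `&` \bigcap_(i < j.+1) N i.

Definition GO_allowed : set X :=
  [set w | (good_left -> ~ strict le w xs) /\ (good_right -> ~ strict le xs w)].

Lemma GO_pinch_decr {i j} : (i <= j)%N -> GO_pinch j `<=` GO_pinch i.
Proof. by move=> ij w [GLRw Nw]; split => //; exact: (bigcap_ord_decr N i.+1 j.+1 ij w Nw). Qed.

Lemma GO_pinch_sub_N i : GO_pinch i `<=` N i.
Proof. by move=> w [_ Nw]; exact: Nw i (ltnSn i). Qed.

Lemma GO_not_allowed w : ~ GO_allowed w ->
  (good_left /\ strict le w xs) \/ (good_right /\ strict le xs w).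
Proof.
move=> nAw; have [?|nL] := pselect (good_left /\ strict le w xs); first by left.
right; apply: contrapT => nR; apply: nAw.
by split => [gl wxs|gr xsw]; [apply: nL | apply: nR].
Qed.

Lemma GO_allowed_closed : closed GO_allowed.
Proof.
have [_ ray_lt ray_gt _] := GO.
rewrite -openC; apply: open_locally => w /GO_not_allowed [[gl wxs]|[gr xsw]].
  by exists [set u | strict le u xs]; split => // u uxs [/(_ gl)].
by exists [set u | strict le xs u]; split => // u xsu [_ /(_ gr)].
Qed.

Lemma GO_allowed_punctured_open : open (GO_allowed `\ xs).
Proof.
have [_ ray_lt ray_gt _] := GO.
apply: open_locally => w [[nL nR] /= nwxs].
have [wxs|xsw] := strict_total GO nwxs.
- exists [set u | strict le u xs]; split => // u /= uxs.
  split; last by move=> eu; case: uxs => _ /(_ eu).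
  split => [gl|_ xsu]; first by case: (nL gl wxs).
  exact: (strict_asym GO uxs xsu).
- exists [set u | strict le xs u]; split => // u /= xsu.
  split; last by move=> eu; case: xsu => _ /(_ (esym eu)).
  split => [_ uxs|gr]; last by case: (nR gr xsw).
  exact: (strict_asym GO uxs xsu).
Qed.

Lemma GO_psi_off_allowed y j v : psi y v -> GO_pinch j v -> ~ GO_allowed v -> psi y xs.
Proof.
move=> psiv [[GLv GRv] _] /GO_not_allowed [[gl vxs]|[gr xsv]]; first exact: gl y v psiv GLv vxs.
by apply: (gr y v psiv GRv); apply/strict_dual.
Qed.

Lemma GO_pinch_allowed_shrinks U : open U -> U xs ->
  exists k, closure (GO_pinch k) `&` GO_allowed `<=` U.
Proof.
move=> oU Uxs.
have [kL shL] : exists k, closure (GO_pinch k) `&` GO_allowed `&` [set w | strict le w xs] `<=` U.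
  case: GL_dichotomy => [gl|bad]; first by exists 0%N => w [[_ [/(_ gl)]]].
  have [k shk] := below_bad_shrinks GO e_surj N_convex N_xs N_avoids bad GO_pinch_sub_N U oU Uxs.
  by exists k => w [[clw _] wxs]; exact: shk.
have [kR shR] : exists k, closure (GO_pinch k) `&` GO_allowed `&` [set w | strict le xs w] `<=` U.
  case: GR_dichotomy => [gr|bad]; first by exists 0%N => w [[_ [_ /(_ gr)]]].
  have N_convex' i : order_convex (fun x y => le y x) (N i) by apply/order_convex_dual.
  have [k shk] := below_bad_shrinks (GO_space_dual GO) e_surj N_convex' N_xs N_avoids bad
    GO_pinch_sub_N U oU Uxs.
  by exists k => w [[clw _] xsw]; apply: shk; split => //; apply/strict_dual.
exists (maxn kL kR) => w [clw Aw].
have [->//|nwxs] := pselect (w = xs).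
have cl_sub k : (k <= maxn kL kR)%N -> closure (GO_pinch k) w.
  by move=> kk; exact: (closureS (GO_pinch_decr kk) clw).
have [wxs|xsw] := strict_total GO nwxs.
  by apply: shL; split => //; split => //; exact/cl_sub/leq_maxl.
by apply: shR; split => //; split => //; exact/cl_sub/leq_maxr.
Qed.

Lemma GO_pinching : pinching psi xs e GO_pinch GO_allowed.
Proof.
split.
- by move=> j; apply: openI; [exact: openI | exact: open_bigcap_ord].
- by move=> i j; exact: GO_pinch_decr.
- by split.
- by move=> i /N_avoids; apply: subsetI_eq0 => //; exact: GO_pinch_sub_N.
- exact: GO_allowed_closed.
- by split => _ [].
- exact: GO_allowed_punctured_open.
- exact: GO_pinch_allowed_shrinks.
- exact: GO_psi_off_allowed.
Qed.

End GOPinching.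


Lemma GO_pinching_exists {X Y : topologicalType} {le : X -> X -> Prop} (psi : Y -> set X)
    (xs : X) (e : nat -> Y) :
  GO_space le -> (forall y, exists n, e n = y) -> (forall y, closed (psi y)) ->
  exists O C, pinching psi xs e O C.
Proof.
move=> GO e_surj psi_closed.
have /choice [N HN] : forall i, exists V, [/\ open V, order_convex le V, V xs &
    ~ psi (e i) xs -> V `&` psi (e i) = set0].
  by move=> i; exact: convex_nbhs_avoiding GO _ xs (psi_closed (e i)).
have [GL [oGL GLxs GLdich]] := open_nbhs_dichotomy xs (below_good le psi xs).
have [GR [oGR GRxs GRdich]] := open_nbhs_dichotomy xs (below_good (fun x y => le y x) psi xs).
exists (GO_pinch N GL GR), (GO_allowed le psi xs GL GR).
by apply: GO_pinching => // i; case: (HN i).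
Qed.

Lemma GO_point_reduction {X Y : topologicalType} {le : X -> X -> Prop} (e : nat -> Y) :
  accessible_space X -> GO_space le -> has_clopen_base Y -> (forall y, exists n, e n = y) ->
  forall (psi : Y -> set X) (ys : Y), lsc_closed psi ->
  exists psi', [/\ lsc_closed psi', forall y, psi' y `<=` psi y,
                   exists x, psi' ys = [set x] & usc_at psi' ys].
Proof.
move=> X_T1 GO Y_clopen e_surj psi ys psi_cl.
have [xs psi_ys_xs] := (psi_cl.1 ys).2.
have [O [C OC]] := GO_pinching_exists psi xs e GO e_surj (fun y => (psi_cl.1 y).1).
have [W [W_clopen W_decr W_ys W_meets]] :=
  nested_clopen_nbhs ys (fun j => [set y | psi y `&` O j !=set0]) Y_clopen
    (fun j => psi_cl.2 _ (pinch_open OC j))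
    (fun j => ex_intro _ xs (conj psi_ys_xs (pinch_xs OC j))).
exists (pinched psi O C W); split.
- exact: pinched_lsc_closed X_T1 e_surj psi_cl OC W_clopen W_decr W_meets.
- by move=> y x [].
- by exists xs; exact: pinched_limit X_T1 e_surj OC W_meets ys W_ys.
- exact: pinched_usc_at X_T1 e_surj OC W_clopen W_meets ys W_ys.
Qed.

Theorem mainTheorem2 (X : topologicalType) (le : X -> X -> Prop) :
  accessible_space X -> GO_space le -> C_selective X.
Proof.
move=> X_T1 GO Y Y_countable _ Y_regular.
case/pfcard_geP: Y_countable => [Y_empty|[e]].
  move=> phi _ _; have noY (y : Y) : False by have : [set: Y] y by []; rewrite Y_empty.
  by exists (fun y => False_rect X (noY y)); split => y; case: (noY y).
have e_surj y : exists n, e n = y by have [n _ <-] := @surj _ _ _ _ e y I; exists n.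
apply: (selective_of_reductions e e_surj) => psi y.
exact: GO_point_reduction X_T1 GO (countable_regular_clopen_base e e_surj Y_regular) e_surj psi y.
Qed.
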